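(* In the Neutralization-Based Reclamation (NBR) scheme described in the context, the number of nodes that are retired but not yet reclaimed is bounded (in every execution, including executions in which threads are delayed or crash).
   Context: Setting: an asynchronous shared-memory system with a fixed number $p$ of threads operating on a linked concurrent data structure; each unlinked node is retired by exactly one thread. NBR works as follows. Each thread has a private limbo bag of retired nodes, a thread-local flag restartable, and a row of a shared array reservations; each data structure operation reserves at most $k$ nodes, where $k$ is strictly smaller than the limbo bag size threshold $h$. Operations consist of read phases (start from an entry point, read only; restartable set to true at the start after clearing reservations) and write phases (entered after writing reservations of all nodes to be accessed in the write phase and setting restartable to false; only reserved nodes are accessed). On a neutralizing signal a thread with restartable true discards its private references and restarts its read phase from a checkpoint; a thread with restartable false ignores the signal. A thread appends each node it retires to its limbo bag; whenever the limbo bag exceeds the threshold $h$, the thread signals all other threads, scans all reservations, and frees every node in its limbo bag that is not reserved. Signals are assumed to be handled by the recipient before it takes any further step once the sender finishes sending. *)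

(* An abstract operational model of NBR (Neutralization-Based
   Reclamation) with p threads, per-operation reservation bound k and limbo-bag
   threshold h.  Nodes are identified by natural numbers. *)
From mathcomp Require Import all_boot.
Set Implicit Arguments. Unset Strict Implicit. Unset Printing Implicit Defensive.

Record nbr_state (p : nat) := NbrState {
  bag         : 'I_p -> seq nat;
  res         : 'I_p -> seq nat;   (* row of the shared reservations array *)
  restartable : 'I_p -> bool;
  retired     : seq nat;           (* ghost: every node retired so far *)
  freed       : seq nat            (* ghost: every node freed so far *)
}.

Definition upd (p : nat) (T : Type) (f : 'I_p -> T) (t : 'I_p) (v : T) :
  'I_p -> T := fun u => if u == t then v else f u.

Definition init_state (p : nat) : nbr_state p :=
  NbrState (fun _ => [::]) (fun _ => [::]) (fun _ => true) [::] [::].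

Definition reserved (p : nat) (s : nbr_state p) (x : nat) : bool :=
  [exists u : 'I_p, x \in res s u].

(* Handling of a neutralizing signal by every thread: a thread with
   restartable = true discards its private references and restarts its read
   phase (its private references are not part of this abstract state, and it
   stays in its read phase); a thread with restartable = false ignores it. *)
Definition signal_all (p : nat) (s : nbr_state p) : nbr_state p := s.

(* Thread t retires node x: append to its limbo bag; if the bag exceeds h,
   signal all other threads (handled before they take further steps), scan all
   reservations and free every non-reserved node of the bag. *)
Definition retire_step (p h : nat) (s : nbr_state p) (t : 'I_p) (x : nat) :
    nbr_state p :=
  let b := rcons (bag s t) x in
  let s1 := NbrState (upd (bag s) t b) (res s) (restartable s)
                     (rcons (retired s) x) (freed s) in
  if size b <= h then s1 else
  let s2 := signal_all s1 in
  NbrState (upd (bag s2) t [seq y <- b | reserved s2 y]) (res s2)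
           (restartable s2) (retired s2)
           (freed s2 ++ [seq y <- b | ~~ reserved s2 y]).

(* One atomic step of some thread.  Delays and crashes are modelled by the
   arbitrary interleaving: a crashed thread simply takes no further steps. *)
Inductive nbr_step (p k h : nat) : nbr_state p -> nbr_state p -> Prop :=
  | StepBeginRead (s : nbr_state p) (t : 'I_p) :
      nbr_step k h s
        (NbrState (bag s) (upd (res s) t [::]) (upd (restartable s) t true)
                  (retired s) (freed s))
  | StepReserve (s : nbr_state p) (t : 'I_p) (r : seq nat) :
      restartable s t -> size r <= k ->
      nbr_step k h s
        (NbrState (bag s) (upd (res s) t r) (restartable s) (retired s) (freed s))
  | StepEnterWrite (s : nbr_state p) (t : 'I_p) :
      nbr_step k h s
        (NbrState (bag s) (res s) (upd (restartable s) t false)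
                  (retired s) (freed s))
  | StepRetire (s : nbr_state p) (t : 'I_p) (x : nat) :
      (* each unlinked node is retired by exactly one thread, exactly once *)
      x \notin retired s ->
      nbr_step k h s (retire_step h s t x).

Inductive nbr_reachable (p k h : nat) : nbr_state p -> Prop :=
  | ReachInit : nbr_reachable k h (init_state p)
  | ReachStep (s s' : nbr_state p) :
      nbr_reachable k h s -> nbr_step k h s s' -> nbr_reachable k h s'.

Definition unreclaimed (p : nat) (s : nbr_state p) : nat :=
  size [seq x <- retired s | x \notin freed s].

From mathcomp Require Import all_boot.

(* Every retired node that has not been freed lies in some thread's limbo bag,
   so it suffices to bound the bags.  A bag holds at most h nodes before a
   scan, and a scan keeps only reserved nodes; since each of the p rows of the
   reservation array holds at most k nodes, a bag never exceeds max(h, p k)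
   distinct nodes.  The bound does not need k < h. *)

Set Implicit Arguments. Unset Strict Implicit. Unset Printing Implicit Defensive.

Lemma uniq_size_le_cover (T : eqType) (I : finType) (g : I -> seq T) (c : nat)
    (s : seq T) :
  uniq s -> {subset s <= [pred x | [exists i, x \in g i]]} ->
  (forall i, size (g i) <= c) -> size s <= #|I| * c.
Proof.
move=> s_uniq s_cover g_size.
have s_flat : {subset s <= flatten [seq g i | i <- enum I]}.
  by move=> x /s_cover /existsP [i xi]; apply/flatten_mapP; exists i; rewrite ?mem_enum.
apply: leq_trans (uniq_leq_size s_uniq s_flat) _.
rewrite size_flatten /shape -map_comp sumnE big_map big_enum /= -sum_nat_const.
exact: leq_sum.
Qed.

Lemma upd_sub (p : nat) (T : eqType) (f : 'I_p -> seq T) (t : 'I_p) (b : seq T) :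
  {subset f t <= b} -> forall u, {subset f u <= upd f t b u}.
Proof. by rewrite /upd => ftb u; case: (eqVneq u t) => [->|_ y]. Qed.

Section Invariant.

Variables p k h : nat.

Record nbr_inv (s : nbr_state p) : Prop := NbrInv {
  retired_uniq : uniq (retired s);
  bag_retired : forall t, {subset bag s t <= retired s};
  bag_uniq : forall t, uniq (bag s t);
  res_size : forall t, size (res s t) <= k;
  bag_size : forall t, size (bag s t) <= maxn h (p * k);
  unfreed_in_bag : forall x, x \in retired s -> x \notin freed s ->
    [exists t, x \in bag s t]
}.

Lemma nbr_inv_init : nbr_inv (init_state p).
Proof. by split. Qed.

Lemma nbr_inv_set_res (s : nbr_state p) (r : 'I_p -> seq nat) f :
  nbr_inv s -> (forall t, size (r t) <= k) ->
  nbr_inv (NbrState (bag s) r f (retired s) (freed s)).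
Proof. by case=> *; split. Qed.

Variables (s : nbr_state p) (t : 'I_p) (x : nat).
Hypotheses (inv_s : nbr_inv s) (x_fresh : x \notin retired s).

Let b := rcons (bag s t) x.

Let b_uniq : uniq b.
Proof.
rewrite rcons_uniq bag_uniq // andbT.
by apply: contra x_fresh; apply: bag_retired.
Qed.

Let x_in_b : x \in b.
Proof. by rewrite mem_rcons mem_head. Qed.

Let bag_sub_b : {subset bag s t <= b}.
Proof. by move=> y; rewrite mem_rcons in_cons orbC => ->. Qed.

Let b_retired : {subset b <= rcons (retired s) x}.
Proof.
move=> y; rewrite !mem_rcons !in_cons => /orP [->//|/(bag_retired inv_s) ->].
by rewrite orbT.
Qed.

Let retired_uniq_rcons : uniq (rcons (retired s) x).
Proof. by rewrite rcons_uniq x_fresh retired_uniq. Qed.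

Let bag_retired_rcons u : {subset bag s u <= rcons (retired s) x}.
Proof.
by move=> y /(bag_retired inv_s); rewrite mem_rcons in_cons orbC => ->.
Qed.

Lemma nbr_inv_append : size b <= h -> nbr_inv (retire_step h s t x).
Proof.
rewrite /retire_step /signal_all => b_size; rewrite b_size.
split=> //= [u|u|u|u|y].
- by rewrite /upd; case: (u =P t) => _; [apply: b_retired | apply: bag_retired_rcons].
- by rewrite /upd; case: (u =P t) => _; [apply: b_uniq | apply: (bag_uniq inv_s)].
- exact: res_size inv_s u.
- rewrite /upd; case: (u =P t) => _; last exact: bag_size inv_s u.
  by rewrite leq_max b_size.
rewrite mem_rcons => /predU1P [-> _|y_ret y_unfreed].
  by apply/existsP; exists t; rewrite /upd eqxx x_in_b.
have /existsP [u yu] := unfreed_in_bag inv_s y_ret y_unfreed.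
by apply/existsP; exists u; apply: upd_sub bag_sub_b u y yu.
Qed.

Lemma nbr_inv_scan : h < size b -> nbr_inv (retire_step h s t x).
Proof.
rewrite /retire_step /signal_all ltnNge => /negbTE -> /=.
split=> //= [u|u|u|u|y].
- rewrite /upd; case: (u =P t) => _; last exact: bag_retired_rcons.
  by move=> y; rewrite mem_filter => /andP [_ /b_retired].
- by rewrite /upd; case: (u =P t) => _; [apply: filter_uniq | apply: (bag_uniq inv_s)].
- exact: res_size inv_s u.
- rewrite /upd; case: (u =P t) => _; last exact: bag_size inv_s u.
  rewrite leq_max -[p in p * k]card_ord; apply/orP; right.
  apply: uniq_size_le_cover (res_size inv_s); first exact: filter_uniq.
  by move=> y; rewrite mem_filter => /andP [].
rewrite mem_rcons mem_cat negb_or mem_filter => /predU1P y_ret /andP [y_unfreed].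
case y_b : (y \in b); rewrite ?andbT ?andbF; [move/negbNE => y_res | move=> _].
  by apply/existsP; exists t; rewrite /upd eqxx mem_filter y_res.
have {}y_ret : y \in retired s by case: y_ret y_b => [->|//]; rewrite x_in_b.
have /existsP [u yu] := unfreed_in_bag inv_s y_ret y_unfreed.
apply/existsP; exists u; rewrite /upd; case: (u =P t) => [ut|//].
by move: y_b; rewrite bag_sub_b // -ut.
Qed.

Lemma nbr_inv_retire : nbr_inv (retire_step h s t x).
Proof.
by case: (leqP (size b) h); [apply: nbr_inv_append | apply: nbr_inv_scan].
Qed.

End Invariant.

Lemma nbr_inv_step (p k h : nat) (s s' : nbr_state p) :
  nbr_step k h s s' -> nbr_inv k h s -> nbr_inv k h s'.
Proof.
case=> {s s'} [s t|s t r _ r_size|s t|s t x x_fresh] inv_s.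
- apply: nbr_inv_set_res => // u; rewrite /upd.
  by case: (u =P t) => _; last exact: res_size inv_s u.
- apply: nbr_inv_set_res => // u; rewrite /upd.
  by case: (u =P t) => _; [exact: r_size | exact: res_size inv_s u].
- exact: nbr_inv_set_res (res_size inv_s).
exact: nbr_inv_retire.
Qed.

Lemma nbr_reachable_inv (p k h : nat) (s : nbr_state p) :
  nbr_reachable k h s -> nbr_inv k h s.
Proof.
by elim=> [|s0 s1 _ inv_s0 step]; [apply: nbr_inv_init | apply: nbr_inv_step inv_s0].
Qed.

Theorem lemma7 (p k h : nat) (hkh : k < h) :
  exists B : nat, forall s : nbr_state p,
    nbr_reachable k h s -> unreclaimed s <= B.
Proof.
exists (p * maxn h (p * k)) => s /nbr_reachable_inv inv_s.
rewrite /unreclaimed -[p in p * _]card_ord.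
apply: uniq_size_le_cover (bag_size inv_s).
  exact: filter_uniq (retired_uniq inv_s).
move=> y; rewrite mem_filter => /andP [y_unfreed y_ret].
exact: unfreed_in_bag inv_s y y_ret y_unfreed.
Qed.
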